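(* For $(c,d)\in\mathbb{C}\times\mathbb{C}^*$ let $f_{c,d}(z) = 1 + \frac cz + \frac d{z^2}$, with critical points $0$ and $-2d/c$ ($=\infty$ when $c=0$), and identify $(c,d)$ with $[c:d:1]\in\mathbb{CP}^2$. Let $\mathcal{X}_n$ be the set of $(c,d)\in\mathbb{C}\times\mathbb{C}^*$ such that $0$ is periodic under $f_{c,d}$ with period dividing $n$, and $\mathcal{Y}_m$ the set of $(c,d)\in\mathbb{C}\times\mathbb{C}^*$ such that $-2d/c$ is periodic under $f_{c,d}$ with period dividing $m$, with closures $\overline{\mathcal{X}_n}$, $\overline{\mathcal{Y}_m}$ in $\mathbb{CP}^2$. Then for all $n\ge 3$ and $m\ge 1$, \[ \overline{\mathcal{X}_n}\cap\overline{\mathcal{Y}_m}\cap\{[c:d:0] \in \mathbb{CP}^2\} = \emptyset. \] *)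

From HB Require Import structures.
From mathcomp Require Import all_boot all_order all_algebra.
From mathcomp Require Import complex reals.
Set Implicit Arguments. Unset Strict Implicit. Unset Printing Implicit Defensive.
Import Order.TTheory GRing.Theory Num.Theory.
Local Open Scope ring_scope.

Section Defs.
Variable R : realType.
Local Notation C := R[i].

(* Points of the Riemann sphere: Some z = z in C, None = infinity. *)
Definition sphere := option C.

(* f_{c,d}(z) = 1 + c/z + d/z^2 on the Riemann sphere (for d <> 0):
   f(infinity) = 1, f(0) = infinity. *)
Definition fcd (c d : C) (z : sphere) : sphere :=
  match z with
  | None => Some 1
  | Some w => if w == 0 then None else Some (1 + c / w + d / w ^+ 2)
  end.

Definition crit2 (c d : C) : sphere :=
  if c == 0 then None else Some (- (2%:R * d) / c).

Definition Xset (n : nat) (p : C * C) : Prop :=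
  p.2 != 0 /\ iter n (fcd p.1 p.2) (Some 0) = Some 0.

Definition Yset (m : nat) (p : C * C) : Prop :=
  p.2 != 0 /\ iter m (fcd p.1 p.2) (crit2 p.1 p.2) = crit2 p.1 p.2.

Definition cvgC (u : nat -> C) (l : C) : Prop :=
  forall e : C, 0 < e -> exists N : nat, forall k : nat, (N <= k)%N -> `|u k - l| < e.

(* [c0:d0:0] (with (c0,d0) <> (0,0)) lies in the closure in CP^2 of
   S ⊆ C x C* (embedded via (c,d) |-> [c:d:1]): there is a sequence in S whose
   images converge in CP^2 to [c0:d0:0], i.e. admit homogeneous representatives
   lam_k (c_k, d_k, 1) converging to (c0, d0, 0) in C^3. *)
Definition in_closure_at_infinity (S : C * C -> Prop) (c0 d0 : C) : Prop :=
  exists (u : nat -> C * C) (lam : nat -> C),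
    (forall k, S (u k)) /\ (forall k, lam k != 0) /\
    cvgC (fun k => lam k * (u k).1) c0 /\
    cvgC (fun k => lam k * (u k).2) d0 /\
    cvgC lam 0.
End Defs.

From HB Require Import structures.
From mathcomp Require Import all_boot all_order all_algebra.
From mathcomp Require Import complex reals.
From mathcomp Require Import ring lra.
Set Implicit Arguments. Unset Strict Implicit. Unset Printing Implicit Defensive.
Import Order.TTheory GRing.Theory Num.Theory.
Local Open Scope ring_scope.

(** The map f_{c,d} acts on homogeneous coordinates by
    [p : q] |-> [p^2 + c p q + d q^2 : p^2].  Scaling the parameter to
    (t c, t d, t) and rescaling the second coordinate by t at every other step
    turns the orbits into polynomials in (t, t c, t d); hence the periodicity
    conditions defining X_n and Y_m survive the limit t -> 0 and become
    conditions on the limit dynamics at [c : d : 0].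

    For the limit dynamics the coordinate u = 1 + (c/d) z obeys, every two
    steps, u |-> u + 1/u - 1 + c/d.  If Re(c/d) >= 1, then Re u > 1 along the
    orbit of 1, which therefore never reaches 0 (as X_n requires).  If
    Re(c/d) <= 1, then Re u starts at -1 on the critical point -2d/c and
    drops strictly below -1 afterwards, so that point is never periodic (as
    Y_m requires).  The cases c = 0 and d = 0 are checked directly. *)

Local Notation Re := complex.Re.
Local Notation Im := complex.Im.

Section ComplexSequences.
Variable R : realType.
Local Notation C := R[i].
Implicit Types (u v : nat -> C) (a b l : C).

Lemma cvgC_cst a : cvgC (fun=> a) a.
Proof. by move=> e e0; exists 0%N => k _; rewrite subrr normr0. Qed.

Lemma cvgC_ext {u v l} : u =1 v -> cvgC u l -> cvgC v l.
Proof. by move=> uv hu e /hu [N HN]; exists N => k /HN; rewrite uv. Qed.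

Lemma cvgC_unique {u a b} : cvgC u a -> cvgC u b -> a = b.
Proof.
move=> ha hb; apply/eqP/negPn/negP => neq_ab.
have e_gt0 : 0 < `|a - b| / 2%:R by rewrite divr_gt0 ?ltr0n // normr_gt0 subr_eq0.
have [Na Ha] := ha _ e_gt0; have [Nb Hb] := hb _ e_gt0.
have Hak := Ha _ (leq_maxl Na Nb); rewrite distrC in Hak.
have := le_lt_trans (ler_distD _ a b) (ltrD Hak (Hb _ (leq_maxr Na Nb))).
by rewrite -splitr ltxx.
Qed.

Lemma cvgC_subr {u l} : cvgC u l <-> cvgC (fun k => u k - l) 0.
Proof. by split=> h e /h [N HN]; exists N => k /HN; rewrite subr0. Qed.

Lemma cvgC0_add {u v} : cvgC u 0 -> cvgC v 0 -> cvgC (fun k => u k + v k) 0.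
Proof.
move=> hu hv e e0.
have e2 : 0 < e / 2%:R by rewrite divr_gt0 // ltr0n.
have [Nu Hu] := hu _ e2; have [Nv Hv] := hv _ e2.
exists (maxn Nu Nv) => k; rewrite geq_max => /andP [kNu kNv].
move: (Hu k kNu) (Hv k kNv); rewrite !subr0 => hu' hv'.
by rewrite [e]splitr; exact: le_lt_trans (ler_normD _ _) (ltrD hu' hv').
Qed.

Lemma cvgC0_mul {u v} : cvgC u 0 -> cvgC v 0 -> cvgC (fun k => u k * v k) 0.
Proof.
move=> hu hv e e0.
have [Nu Hu] := hu _ ltr01; have [Nv Hv] := hv _ e0.
exists (maxn Nu Nv) => k; rewrite geq_max => /andP [kNu kNv].
move: (Hu k kNu) (Hv k kNv); rewrite !subr0 => hu' hv'.
by rewrite normrM -[e]mul1r; apply: ltr_pM.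
Qed.

Lemma cvgC0_scale a {u} : cvgC u 0 -> cvgC (fun k => a * u k) 0.
Proof.
move=> hu e e0.
have a1_gt0 : 0 < `|a| + 1 by rewrite ltr_wpDl.
have [N HN] := hu _ (divr_gt0 e0 a1_gt0).
exists N => k /HN; rewrite !subr0 normrM => hk.
rewrite [e](_ : _ = (`|a| + 1) * (e / (`|a| + 1))); last by field; rewrite gt_eqF.
by apply: ltr_pM => //; rewrite ltrDl ltr01.
Qed.

Lemma cvgC_add {u v a b} : cvgC u a -> cvgC v b -> cvgC (fun k => u k + v k) (a + b).
Proof.
move=> /cvgC_subr hu /cvgC_subr hv; apply/cvgC_subr.
by apply: (cvgC_ext _ (cvgC0_add hu hv)) => k; ring.
Qed.

Lemma cvgC_mul {u v a b} : cvgC u a -> cvgC v b -> cvgC (fun k => u k * v k) (a * b).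
Proof.
move=> /cvgC_subr hu /cvgC_subr hv; apply/cvgC_subr.
have := cvgC0_add (cvgC0_add (cvgC0_mul hu hv) (cvgC0_scale a hv)) (cvgC0_scale b hu).
by apply: cvgC_ext => k; ring.
Qed.

Lemma cvgC_exp {u a} n : cvgC u a -> cvgC (fun k => u k ^+ n) (a ^+ n).
Proof.
move=> hu; elim: n => [|n IH]; first exact: cvgC_cst.
by rewrite exprS; apply: (cvgC_ext _ (cvgC_mul hu IH)) => k; rewrite exprS.
Qed.

Definition cvgC_pair (x : nat -> C * C) (l : C * C) :=
  cvgC (fun k => (x k).1) l.1 /\ cvgC (fun k => (x k).2) l.2.

End ComplexSequences.

Section HomogeneousLift.
Variable R : realType.
Local Notation C := R[i].
Implicit Types (a c d t : C) (x y : C * C).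

Definition pt x : sphere R := if x.2 == 0 then None else Some (x.1 / x.2).

Lemma pt_scale a x : a != 0 -> pt (a *: x) = pt x.
Proof.
move=> a0; rewrite /pt /= -[a *: x.1]/(a * x.1) -[a *: x.2]/(a * x.2).
rewrite mulf_eq0 (negPf a0) /=; case: eqP => // /eqP x2_0.
by congr Some; field; rewrite a0 x2_0.
Qed.

Lemma pt_cross x y : pt x = pt y -> x.1 * y.2 = x.2 * y.1.
Proof.
rewrite /pt; case: eqP => x2_0; case: eqP => y2_0 //; first by rewrite x2_0 y2_0 mulr0 mul0r.
case=> /eqP; rewrite -subr_eq0 => /eqP e; apply/eqP; rewrite -subr_eq0.
have -> : x.1 * y.2 - x.2 * y.1 = (x.1 / x.2 - y.1 / y.2) * (x.2 * y.2).
  by field; apply/andP; split; apply/eqP.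
by rewrite e mul0r.
Qed.

Lemma pt_eq0 x : pt x = Some 0 -> x.1 = 0.
Proof.
have pt01 : pt (0, 1) = Some 0 by rewrite /pt /= oner_eq0 mul0r.
by rewrite -pt01 => /pt_cross; rewrite /= mulr1 mulr0.
Qed.

Definition fcd_hom c d x : C * C := (x.1 ^+ 2 + c * x.1 * x.2 + d * x.2 ^+ 2, x.1 ^+ 2).

Lemma fcd_hom_eq0 c d x : d != 0 -> (fcd_hom c d x == 0) = (x == 0).
Proof.
case: x => p q d0; rewrite !xpair_eqE /= expf_eq0 /= andbC.
have [-> | //] := eqVneq p 0.
by rewrite expr0n mulr0 mul0r !add0r mulf_eq0 (negPf d0) expf_eq0.
Qed.

Lemma fcd_pt c d x : d != 0 -> x != 0 -> fcd c d (pt x) = pt (fcd_hom c d x).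
Proof.
case: x => p q d0; rewrite /pt /= xpair_eqE.
have [-> | q0] := eqVneq q 0.
  rewrite andbT => p0; rewrite expf_eq0 (negPf p0) andbF.
  by congr Some; field.
move=> _; have [-> | p0] := eqVneq p 0; first by rewrite mul0r /= !eqxx expr0n eqxx.
rewrite /= mulf_eq0 invr_eq0 (negPf p0) (negPf q0) /= expf_eq0 (negPf p0) andbF.
by congr Some; field; rewrite p0 q0.
Qed.

Definition crit_hom c d : C * C := (- (2%:R * d), c).

Lemma crit2_pt c d : crit2 c d = pt (crit_hom c d).
Proof. by rewrite /crit2 /pt /=; case: eqP. Qed.

(* For t != 0, the orbit point at step k of f_{c,d} is [x.1 : t^(odd k) x.2]
   where x is the k-th iterate of hstep with parameters (t, t c, t d). *)
Definition hstep t c d (b : bool) x : C * C :=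
  if b then (x.1 ^+ 2 + c * x.1 * x.2 + t * d * x.2 ^+ 2, x.1 ^+ 2)
  else (t * x.1 ^+ 2 + c * x.1 * x.2 + d * x.2 ^+ 2, x.1 ^+ 2).

Definition horbit t c d k x : C * C := iteri k (fun i => hstep t c d (odd i)) x.

Lemma horbitS t c d k x : horbit t c d k.+1 x = hstep t c d (odd k) (horbit t c d k x).
Proof. by []. Qed.

Definition dehom t (b : bool) x : C * C := (x.1, t ^+ b * x.2).

Lemma dehom_hstep t c d b x :
  dehom t (~~ b) (hstep t (t * c) (t * d) b x) = t ^+ (~~ b) *: fcd_hom c d (dehom t b x).
Proof. by case: b; congr (_, _); rewrite /= -[_ *: _]/(_ * _); ring. Qed.

Lemma iter_fcd_horbit t c d x k : t != 0 -> d != 0 -> x != 0 ->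
  dehom t (odd k) (horbit t (t * c) (t * d) k x) != 0 /\
  iter k (fcd c d) (pt x) = pt (dehom t (odd k) (horbit t (t * c) (t * d) k x)).
Proof.
move=> t0 d0 x0; elim: k => [|k [nz0 IH]].
  by rewrite /dehom /= mul1r; case: x x0.
rewrite iterS IH fcd_pt // horbitS /=.
rewrite dehom_hstep pt_scale ?expf_neq0 //; split => //.
by rewrite scaler_eq0 negb_or expf_eq0 (negPf t0) andbF fcd_hom_eq0.
Qed.

Lemma cvgC_pair_hstep (t c d : nat -> C) (x : nat -> C * C) t0 c0 d0 x0 b :
  cvgC t t0 -> cvgC c c0 -> cvgC d d0 -> cvgC_pair x x0 ->
  cvgC_pair (fun k => hstep (t k) (c k) (d k) b (x k)) (hstep t0 c0 d0 b x0).
Proof.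
move=> ht hc hd [h1 h2]; case: b; split; rewrite /=; try exact: cvgC_exp.
- apply: cvgC_add; first apply: cvgC_add.
  + exact: cvgC_exp.
  + exact: cvgC_mul (cvgC_mul hc h1) h2.
  + exact: cvgC_mul (cvgC_mul ht hd) (cvgC_exp _ h2).
- apply: cvgC_add; first apply: cvgC_add.
  + exact: cvgC_mul ht (cvgC_exp _ h1).
  + exact: cvgC_mul (cvgC_mul hc h1) h2.
  + exact: cvgC_mul hd (cvgC_exp _ h2).
Qed.

Lemma cvgC_pair_horbit (t c d : nat -> C) (x : nat -> C * C) t0 c0 d0 x0 k :
  cvgC t t0 -> cvgC c c0 -> cvgC d d0 -> cvgC_pair x x0 ->
  cvgC_pair (fun j => horbit (t j) (c j) (d j) k (x j)) (horbit t0 c0 d0 k x0).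
Proof.
move=> ht hc hd hx; elim: k => [|k IH] //.
exact: (cvgC_pair_hstep _ ht hc hd IH).
Qed.

End HomogeneousLift.

Section LimitDynamics.
Variable R : realType.
Local Notation C := R[i].
Implicit Types (c d : C) (x : C * C).

Lemma Re_invr (z : C) : Re z^-1 = Re z / (Re z ^+ 2 + Im z ^+ 2).
Proof. by case: z. Qed.

Lemma Re_invr_gt0 (z : C) : 0 < Re z -> 0 < Re z^-1.
Proof.
rewrite Re_invr => z_gt0; apply: divr_gt0 => //.
by apply: ltr_wpDr; [exact: sqr_ge0 | rewrite exprn_gt0].
Qed.

Lemma Re_invr_lt0 (z : C) : Re z < 0 -> Re z^-1 < 0.
Proof.
rewrite Re_invr => z_lt0; rewrite pmulr_llt0 ?invr_gt0 //.
by apply: ltr_wpDr; [exact: sqr_ge0 | rewrite -sqrrN exprn_gt0 // oppr_gt0].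
Qed.

Lemma double_cases k : exists j, k = j.*2 \/ k = j.*2.+1.
Proof.
exists k./2; move: (odd_double_half k).
by case: (odd k) => e; [right | left]; rewrite -[in LHS]e.
Qed.

Lemma horbit_oddS t c d j x :
  horbit t c d j.*2.+1 x = hstep t c d false (horbit t c d j.*2 x).
Proof. by rewrite horbitS odd_double. Qed.

Lemma horbit_doubleS t c d j x :
  horbit t c d j.*2.+2 x = hstep t c d true (hstep t c d false (horbit t c d j.*2 x)).
Proof. by rewrite horbitS horbit_oddS oddS odd_double. Qed.

Lemma Re_div_ge1_neq0 c d : 1 <= Re (c / d) -> c != 0 /\ d != 0.
Proof.
move=> re_ge1; apply/andP; rewrite -negb_or -[d == 0]invr_eq0 -mulf_eq0.
by apply: (contraTneq _ re_ge1) => ->; rewrite /= ler10.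
Qed.

(* 1 + (c/d) z, for z = x.1 / x.2 *)
Definition ucoord c d x : C := (c * x.1 + d * x.2) / (d * x.2).

Lemma hstep0_fst c d x : d != 0 -> x.2 != 0 ->
  (hstep 0 c d false x).1 = d * x.2 ^+ 2 * ucoord c d x.
Proof. by move=> d0 x2_0; rewrite /ucoord /=; field; rewrite d0 x2_0. Qed.

Lemma ucoord_doubleS c d x : c != 0 -> d != 0 -> x.2 != 0 -> ucoord c d x != 0 ->
  let y := hstep 0 c d true (hstep 0 c d false x) in
  y.2 != 0 /\ ucoord c d y = ucoord c d x + (ucoord c d x)^-1 - 1 + c / d.
Proof.
move=> c0 d0 x2_0 u0 /=; rewrite -[_ * x.1 ^+ 2 + _ * x.2 + _]/(hstep 0 c d false x).1.
rewrite hstep0_fst //.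
have dxu0 := mulf_neq0 (mulf_neq0 d0 (expf_neq0 2 x2_0)) u0.
split; first exact: expf_neq0.
have s0 : c * x.1 + d * x.2 != 0 by move: u0; rewrite mulf_eq0 negb_or => /andP [].
by rewrite /ucoord /=; field; apply/and3P.
Qed.

Lemma Re_ucoord_one_gt1 c d j : 1 <= Re (c / d) ->
  (horbit 0 c d j.*2 (1, 1)).2 != 0 /\ 1 < Re (ucoord c d (horbit 0 c d j.*2 (1, 1))).
Proof.
move=> re_ge1; have [c0 d0] := Re_div_ge1_neq0 re_ge1.
elim: j => [|j [x2_0 IH]].
  split; first exact: oner_neq0.
  have -> : ucoord c d (1, 1) = 1 + c / d by rewrite /ucoord /=; field.
  by rewrite raddfD /=; lra.
rewrite doubleS horbit_doubleS.
have u0 : ucoord c d (horbit 0 c d j.*2 (1, 1)) != 0.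
  by apply: (contraTneq _ IH) => ->; rewrite /= ltr10.
have [y2_0 ->] := ucoord_doubleS c0 d0 x2_0 u0; split => //.
have := Re_invr_gt0 (lt_trans ltr01 IH).
by rewrite !raddfD /=; lra.
Qed.

Lemma Re_ucoord_crit_le_m1 c d j : c != 0 -> d != 0 -> Re (c / d) <= 1 ->
  (horbit 0 c d j.*2 (crit_hom c d)).2 != 0 /\
  Re (ucoord c d (horbit 0 c d j.*2 (crit_hom c d))) <= -1 /\
  ((0 < j)%N -> Re (ucoord c d (horbit 0 c d j.*2 (crit_hom c d))) < -1).
Proof.
move=> c0 d0 re_le1; elim: j => [|j [x2_0 [IH _]]].
  have -> : ucoord c d (crit_hom c d) = -1 by rewrite /ucoord /=; field; rewrite c0 d0.
  by split => //; rewrite raddfN /=; lra.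
rewrite doubleS horbit_doubleS.
have u0 : ucoord c d (horbit 0 c d j.*2 (crit_hom c d)) != 0.
  by apply: (contraTneq _ IH) => ->; rewrite /=; lra.
have [y2_0 ->] := ucoord_doubleS c0 d0 x2_0 u0.
have : Re (ucoord c d (horbit 0 c d j.*2 (crit_hom c d)))^-1 < 0.
  by apply: Re_invr_lt0; lra.
by rewrite !raddfD /=; split => //; lra.
Qed.

Lemma horbit_one_c0_neq0 d k : d != 0 ->
  (horbit 0 0 d k (1, 1)).1 != 0 /\ (horbit 0 0 d k (1, 1)).2 != 0.
Proof.
move=> d0; elim: k => [|k [x1_0 x2_0]]; first by rewrite /= oner_eq0.
rewrite horbitS; case: (odd k); rewrite /= !mul0r ?addr0 ?add0r.
  by split; apply: expf_neq0.
by split; [apply: mulf_neq0 => //; exact: expf_neq0 | exact: expf_neq0].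
Qed.

Lemma horbit_one_d0_even c j : c != 0 ->
  (horbit 0 c 0 j.*2 (1, 1)).2 != 0 /\
  (horbit 0 c 0 j.*2 (1, 1)).1 = j.+1%:R * (horbit 0 c 0 j.*2 (1, 1)).2.
Proof.
move=> c0; elim: j => [|j [x2_0 x1E]]; first by rewrite /= oner_eq0 mul1r.
rewrite doubleS horbit_doubleS /= !mul0r ?add0r ?addr0 ?mulr0 ?addr0 x1E.
have j1_0 : j.+1%:R != 0 :> C by rewrite pnatr_eq0.
split; first by rewrite !expf_neq0 // !mulf_neq0.
by rewrite -[j.+2]addn1 natrD; ring.
Qed.

Lemma horbit_one_fst_neq0_d0 c k : c != 0 -> (horbit 0 c 0 k (1, 1)).1 != 0.
Proof.
move=> c0; have [j [-> | ->]] := double_cases k; have [x2_0 x1E] := horbit_one_d0_even j c0.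
  by rewrite x1E mulf_neq0 // pnatr_eq0.
by rewrite horbit_oddS /= !mul0r add0r addr0 x1E !mulf_neq0 // pnatr_eq0.
Qed.

Lemma horbit_one_fst_neq0 c d k : 1 <= Re (c / d) -> (horbit 0 c d k (1, 1)).1 != 0.
Proof.
move=> re_ge1; have [c0 d0] := Re_div_ge1_neq0 re_ge1.
have [j [-> | ->]] := double_cases k; have [x2_0 u_gt1] := Re_ucoord_one_gt1 j re_ge1.
  apply: (contraTneq _ u_gt1) => x1_0.
  by rewrite /ucoord x1_0 mulr0 add0r divff ?mulf_neq0 //= ltxx.
have u0 : ucoord c d (horbit 0 c d j.*2 (1, 1)) != 0.
  by apply: (contraTneq _ u_gt1) => ->; rewrite /= ltr10.
rewrite horbit_oddS hstep0_fst //.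
exact: mulf_neq0 (mulf_neq0 d0 (expf_neq0 _ x2_0)) u0.
Qed.

Lemma horbit_crit_not_periodic c d m : c != 0 -> d != 0 -> Re (c / d) <= 1 -> (0 < m)%N ->
  (horbit 0 c d m (crit_hom c d)).1 * c !=
  0 ^+ odd m * (horbit 0 c d m (crit_hom c d)).2 * - (2%:R * d).
Proof.
move=> c0 d0 re_le1; have [j [-> | ->]] := double_cases m => m_gt0;
  have [x2_0 [u_le u_lt]] := Re_ucoord_crit_le_m1 j c0 d0 re_le1.
  rewrite odd_double expr0 mul1r; apply: (contraTneq _ (u_lt _)); last by rewrite -double_gt0.
  move=> per; have -> : ucoord c d (horbit 0 c d j.*2 (crit_hom c d)) = -1.
    by rewrite /ucoord (mulrC c) per; field; apply/andP.
  by rewrite /= ltxx.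
have u0 : ucoord c d (horbit 0 c d j.*2 (crit_hom c d)) != 0.
  by apply: (contraTneq _ u_le) => ->; rewrite /=; lra.
rewrite horbit_oddS hstep0_fst // oddS odd_double expr1 !mul0r.
exact: mulf_neq0 (mulf_neq0 (mulf_neq0 d0 (expf_neq0 _ x2_0)) u0) c0.
Qed.

End LimitDynamics.

Section ClosureAtInfinity.
Variable R : realType.
Local Notation C := R[i].
Implicit Types (c d t : C) (p : C * C).

(* f(0) = oo and f(oo) = 1, so f^n(0) = 0 means f^(n-2)(1) = 0. *)
Lemma Xset_horbit n p t : t != 0 -> (3 <= n)%N -> Xset n p ->
  (horbit t (t * p.1) (t * p.2) (n - 2) (1, 1)).1 = 0.
Proof.
move=> t0 n3 [d0 per].
have pt11 : pt (1, 1) = Some 1 :> sphere R by rewrite /pt /= oner_eq0 divr1.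
have one0 : ((1, 1) : C * C) != 0 by rewrite xpair_eqE oner_eq0.
have [_ orbit_eq] := iter_fcd_horbit p.1 (n - 2) t0 d0 one0.
move: per; rewrite -[n in iter n](subnK (ltnW n3)) iterD /= eqxx /= -pt11 orbit_eq.
exact: pt_eq0.
Qed.

Lemma Yset_horbit m p t : t != 0 -> Yset m p ->
  (horbit t (t * p.1) (t * p.2) m (t *: crit_hom p.1 p.2)).1 * (t * p.1) =
  t ^+ odd m * (horbit t (t * p.1) (t * p.2) m (t *: crit_hom p.1 p.2)).2 * (t * - (2%:R * p.2)).
Proof.
move=> t0 [d0 per].
have crit0 : t *: crit_hom p.1 p.2 != 0.
  by rewrite scaler_eq0 negb_or t0 xpair_eqE /= oppr_eq0 mulf_eq0 pnatr_eq0 (negPf d0).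
have [_ orbit_eq] := iter_fcd_horbit p.1 m t0 d0 crit0.
by move: per; rewrite crit2_pt -(pt_scale _ t0) orbit_eq => /pt_cross.
Qed.

Lemma closure_Xset_horbit n c0 d0 : (3 <= n)%N -> in_closure_at_infinity (@Xset R n) c0 d0 ->
  (horbit 0 c0 d0 (n - 2) (1, 1)).1 = 0.
Proof.
move=> n3 [u [t [uX [t_neq0 [hc [hd ht]]]]]].
have one_cvg : cvgC_pair (fun=> (1, 1)) ((1, 1) : C * C) by split; exact: cvgC_cst.
have [h1 _] := cvgC_pair_horbit (n - 2) ht hc hd one_cvg.
apply: (cvgC_unique h1); apply: (cvgC_ext _ (cvgC_cst 0)) => k.
by rewrite Xset_horbit.
Qed.

Lemma closure_Yset_horbit m c0 d0 : in_closure_at_infinity (@Yset R m) c0 d0 ->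
  (horbit 0 c0 d0 m (crit_hom c0 d0)).1 * c0 =
  0 ^+ odd m * (horbit 0 c0 d0 m (crit_hom c0 d0)).2 * - (2%:R * d0).
Proof.
move=> [u [t [uY [t_neq0 [hc [hd ht]]]]]].
have hcrit : cvgC_pair (fun k => t k *: crit_hom (u k).1 (u k).2) (crit_hom c0 d0).
  split => //=; rewrite -mulNr.
  by apply: (cvgC_ext _ (cvgC_mul (cvgC_cst (- 2%:R)) hd)) => k /=; rewrite -[_ *: _]/(_ * _); ring.
have [h1 h2] := cvgC_pair_horbit m ht hc hd hcrit.
apply: (cvgC_unique (cvgC_mul h1 hc)).
apply: (cvgC_ext _ (cvgC_mul (cvgC_mul (cvgC_exp (odd m) ht) h2) hcrit.1)) => k.
by rewrite Yset_horbit.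
Qed.

End ClosureAtInfinity.

Theorem lemma2p2 (R : realType) (n m : nat) :
  (3 <= n)%N -> (1 <= m)%N ->
  forall c0 d0 : R[i], (c0, d0) != (0, 0) ->
  ~ (in_closure_at_infinity (@Xset R n) c0 d0 /\
     in_closure_at_infinity (@Yset R m) c0 d0).
Proof.
move=> n3 m1 c d cd0 [/(closure_Xset_horbit n3) hX /closure_Yset_horbit hY].
have [re_ge1 | re_lt1] := lerP 1 (Re (c / d)).
  by move: hX; apply/eqP; exact: horbit_one_fst_neq0.
have [c0 | c0] := eqVneq c 0.
  have d0 : d != 0 by apply: contraNneq cd0 => d0; rewrite c0 d0.
  by move: hX; rewrite c0; apply/eqP; case: (horbit_one_c0_neq0 (n - 2) d0).
have [d0 | d0] := eqVneq d 0.
  by move: hX; rewrite d0; apply/eqP; exact: horbit_one_fst_neq0_d0.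
by move: hY; apply/eqP; exact: horbit_crit_not_periodic c0 d0 (ltW re_lt1) m1.
Qed.
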